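(* Let $w_0\in\mathbb{N}$ and $w=(w_1,\dots,w_n)\in\mathbb{N}^n$ with each $w_i\le 2^{n^2}$, let $M=cn$ for a sufficiently large absolute constant $c>0$, let $\lambda=M\|w\|_2$, and define $p_W(x)=\left(\sum_{i=1}^n w_ix_i-w_0\right)^2+\lambda\sum_{i=1}^n x_i(1-x_i)$, $f_W(x)=\mathrm{sign}(\tfrac12-p_W(x))$, and $\alpha_n=\frac12\left(1-\sqrt{1-2/\lambda}\right)$. If $x\in[0,1]^n$ is at $\ell_1$ distance more than $\alpha_n$ from every point of $\{0,1\}^n$, then $f_W(x)=-1$.
   Context: $\mathrm{sign}(0)=1$; $\|w\|_2$ is the Euclidean norm. *)

From HB Require Import structures.
From mathcomp Require Import all_boot all_order all_algebra.
From mathcomp Require Import reals.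
Set Implicit Arguments. Unset Strict Implicit. Unset Printing Implicit Defensive.
Import Order.TTheory GRing.Theory Num.Theory.
Local Open Scope ring_scope.

(* sign with the convention sign(0) = 1 *)
Definition sgn {R : realType} (t : R) : R := if 0 <= t then 1 else -1.

Definition norm2 {R : realType} {n : nat} (w : 'I_n -> nat) : R :=
  Num.sqrt (\sum_(i < n) ((w i)%:R) ^+ 2).

Definition lam {R : realType} (c : R) {n : nat} (w : 'I_n -> nat) : R :=
  (c * n%:R) * norm2 w.

Definition pW {R : realType} (c : R) {n : nat} (w0 : nat) (w : 'I_n -> nat)
  (x : 'I_n -> R) : R :=
  (\sum_(i < n) (w i)%:R * x i - w0%:R) ^+ 2
  + lam c w * \sum_(i < n) x i * (1 - x i).

Definition fW {R : realType} (c : R) {n : nat} (w0 : nat) (w : 'I_n -> nat)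
  (x : 'I_n -> R) : R := sgn (2^-1 - pW c w0 w x).

Definition alpha_n {R : realType} (c : R) {n : nat} (w : 'I_n -> nat) : R :=
  2^-1 * (1 - Num.sqrt (1 - 2 / lam c w)).

Definition l1dist {R : realType} {n : nat} (x : 'I_n -> R) (v : 'I_n -> bool) : R :=
  \sum_(i < n) `|x i - (v i)%:R|.

From HB Require Import structures.
From mathcomp Require Import all_boot all_order all_algebra.
From mathcomp Require Import reals.
From mathcomp Require Import ring lra.
Import Order.TTheory GRing.Theory Num.Theory.
Local Open Scope ring_scope.

(* Round x to the nearest vertex v of the cube and let d_i = |x_i - v_i| <= 1/2,
   so that x_i (1 - x_i) = d_i (1 - d_i) and D = sum d_i = l1dist x v > alpha.
   Since sum d_i^2 <= min (D^2, D/2), the penalty sum x_i (1 - x_i) is at least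
   min (D (1 - D), D/2).  The constant alpha is the root in [0, 1/2] of
   lambda t (1 - t) = 1/2, and t (1 - t) increases on [0, 1/2]; when D > 1/2
   the bound lambda D/2 > 1/2 follows from lambda >= 2.  Hence p_W > 1/2. *)

Lemma sum_sqr_le_sqr_sum {R : realDomainType} {I : Type} (s : seq I) {f : I -> R} :
  (forall i, 0 <= f i) -> \sum_(i <- s) f i ^+ 2 <= (\sum_(i <- s) f i) ^+ 2.
Proof.
move=> f_ge0; elim: s => [|a s IHs]; first by rewrite !big_nil expr0n.
rewrite !big_cons.
have : 0 <= \sum_(i <- s) f i by apply: sumr_ge0.
have := f_ge0 a; nra.
Qed.

Definition round01 {R : realFieldType} (t : R) : bool := 2^-1 <= t.

Section RoundToVertex.
Context {R : realFieldType} {t : R}.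
Hypothesis t01 : 0 <= t <= 1.

Lemma dist_round01_le_half : `|t - (round01 t)%:R| <= 2^-1.
Proof.
move/andP: t01 => [t_ge0 t_le1]; rewrite /round01.
case: (lerP 2^-1 t) => t_half /=.
- by rewrite ler0_norm; lra.
- by rewrite subr0 ger0_norm //; lra.
Qed.

Lemma dist_round01_mul1B :
  `|t - (round01 t)%:R| * (1 - `|t - (round01 t)%:R|) = t * (1 - t).
Proof.
move/andP: t01 => [t_ge0 t_le1]; rewrite /round01.
case: (lerP 2^-1 t) => t_half /=.
- by rewrite ler0_norm; [ring | lra].
- by rewrite subr0 ger0_norm.
Qed.

End RoundToVertex.

Section PenaltyLowerBound.
Context {R : realFieldType} {I : Type} (s : seq I) {d : I -> R}.
Hypothesis d_ge0 : forall i, 0 <= d i.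
Hypothesis d_le_half : forall i, d i <= 2^-1.

Lemma sum_mul1B_ge_mul1B_sum :
  (\sum_(i <- s) d i) * (1 - \sum_(i <- s) d i) <= \sum_(i <- s) d i * (1 - d i).
Proof.
have -> : \sum_(i <- s) d i * (1 - d i) = \sum_(i <- s) d i - \sum_(i <- s) d i ^+ 2.
  by rewrite -sumrB; apply: eq_bigr => i _; ring.
have := sum_sqr_le_sqr_sum s d_ge0; lra.
Qed.

Lemma sum_mul1B_ge_half_sum :
  2^-1 * \sum_(i <- s) d i <= \sum_(i <- s) d i * (1 - d i).
Proof.
rewrite mulr_sumr; apply: ler_sum => i _.
have := d_ge0 i; have := d_le_half i; nra.
Qed.

(* [t (1 - t)] is increasing on [0, 1/2], so [a < sum d] transfers the
   equation [a (1 - a) l = 1/2] into a strict inequality. *)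
Lemma half_lt_scaled_sum_mul1B {l a : R} :
  2 <= l -> a * (1 - a) * l = 2^-1 -> a < \sum_(i <- s) d i ->
  2^-1 < l * \sum_(i <- s) d i * (1 - d i).
Proof.
move=> l_ge2 a_eq a_lt_D.
have S_ge_half := sum_mul1B_ge_half_sum.
have S_ge_mul1B := sum_mul1B_ge_mul1B_sum.
set D := \sum_(i <- s) d i in a_lt_D S_ge_half S_ge_mul1B *.
set S := \sum_(i <- s) d i * _ in S_ge_half S_ge_mul1B *.
case: (lerP D 2^-1) => D_le_half.
  have mono : 0 < (D - a) * (1 - D - a) by apply: mulr_gt0; lra.
  nra.
have : 0 <= (l - 2) * S by apply: mulr_ge0; lra.
nra.
Qed.

End PenaltyLowerBound.

Lemma alpha_mul1B {R : rcfType} {l : R} :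
  2 <= l ->
  2^-1 * (1 - Num.sqrt (1 - 2 / l)) * (1 - 2^-1 * (1 - Num.sqrt (1 - 2 / l))) * l
  = 2^-1.
Proof.
move=> l_ge2; set s := Num.sqrt _.
have l_neq0 : l != 0 by apply: lt0r_neq0; lra.
have s2 : s ^+ 2 = 1 - 2 / l.
  apply: sqr_sqrtr; rewrite subr_ge0 ler_pdivrMr; lra.
have -> : 2^-1 * (1 - s) * (1 - 2^-1 * (1 - s)) * l = (1 - s ^+ 2) * l / 4.
  by field.
by rewrite s2; field.
Qed.

Lemma norm2_ge1 (R : realType) {n : nat} {w : 'I_n -> nat} :
  (exists i, w i != 0%N) -> 1 <= norm2 (R := R) w.
Proof.
move=> [j wj_neq0]; rewrite /norm2 -[X in X <= _]sqrtr1 ler_sqrt; last first.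
  by apply: sumr_ge0 => i _; apply: sqr_ge0.
rewrite (bigD1 j) //= ler_wpDr //; first by apply: sumr_ge0 => i _; apply: sqr_ge0.
by rewrite -natrX ler1n expn_gt0 lt0n wj_neq0.
Qed.

Lemma lam_ge2 {R : realType} {c : R} {n : nat} {w : 'I_n -> nat} :
  2 <= c -> (exists i, w i != 0%N) -> 2 <= lam c w.
Proof.
move=> c_ge2 w_neq0; have N_ge1 := norm2_ge1 R w_neq0.
have n_ge1 : 1 <= (n%:R : R).
  by case: w_neq0 => j _; rewrite ler1n (leq_ltn_trans (leq0n j) (ltn_ord j)).
have cn_ge2 : 2 <= c * n%:R by nra.
rewrite /lam; nra.
Qed.

Lemma fW_eq_N1 (R : realType) (c : R) (n w0 : nat) (w : 'I_n -> nat) (x : 'I_n -> R) :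
  2^-1 < lam c w * \sum_(i < n) x i * (1 - x i) -> fW c w0 w x = -1.
Proof.
move=> penalty_gt; rewrite /fW /sgn /pW ifF //; apply/negbTE; rewrite -ltNge.
have := sqr_ge0 (\sum_(i < n) (w i)%:R * x i - w0%:R); lra.
Qed.

Theorem claim5p8 (R : realType) :
  exists c0 : R, 0 < c0 /\
  forall (c : R), c0 <= c ->
  forall (n w0 : nat) (w : 'I_n -> nat),
    (forall i, (w i <= 2 ^ (n ^ 2))%N) ->
    (exists i, w i != 0%N) ->
  forall x : 'I_n -> R,
    (forall i, 0 <= x i <= 1) ->
    (forall v : 'I_n -> bool, alpha_n c w < l1dist x v) ->
    fW c w0 w x = -1.
Proof.
exists 2; split=> // c c_ge2 n w0 w _ w_neq0 x x01 far_from_cube.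
have l_ge2 := lam_ge2 c_ge2 w_neq0.
apply: fW_eq_N1.
rewrite -(eq_bigr _ (fun i _ => dist_round01_mul1B (x01 i))).
apply: (half_lt_scaled_sum_mul1B _ _ _ l_ge2 (alpha_mul1B l_ge2)).
- by move=> i; apply: normr_ge0.
- by move=> i; apply: dist_round01_le_half.
- exact: (far_from_cube (fun i => round01 (x i))).
Qed.
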